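(* Let $a,b,c,d\in\mathbb{R}$ and $w=a\mathbb{I}+bV_{(AB)}+cV_{(AC)}+dV_{(BC)}$ on $(\mathbb{C}^2)^{\otimes3}$. Then $w$ is local-positive if and only if $$a+b\cos^2\theta+c\cos^2\Omega+d\cos^2(\theta-\Omega)\ge0\quad\text{for all }\theta,\Omega\in\mathbb{R}.$$
   Context: $V_{(XY)}$ denotes the operator swapping tensor factors $X$ and $Y$ among the three qubit factors $A,B,C$. An operator $M$ on $(\mathbb{C}^2)^{\otimes3}$ is local-positive if $\langle\psi_1\psi_2\psi_3|M|\psi_1\psi_2\psi_3\rangle\ge0$ for all unit vectors $\psi_1,\psi_2,\psi_3\in\mathbb{C}^2$. *)

From Stdlib Require Import Reals.
Open Scope R_scope.

Record Cx := mkCx { Re : R; Im : R }.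

Definition Cadd (z w : Cx) : Cx := mkCx (Re z + Re w) (Im z + Im w).
Definition Cmul (z w : Cx) : Cx :=
  mkCx (Re z * Re w - Im z * Im w) (Re z * Im w + Im z * Re w).
Definition Cconj (z : Cx) : Cx := mkCx (Re z) (- Im z).
Definition Cof (r : R) : Cx := mkCx r 0.
Definition C0 : Cx := Cof 0.
Definition C1 : Cx := Cof 1.
Definition Cnorm2 (z : Cx) : R := Re z * Re z + Im z * Im z.

Definition qubit := bool -> Cx.
Definition unit_qubit (psi : qubit) : Prop :=
  Cnorm2 (psi false) + Cnorm2 (psi true) = 1.

(* Basis of (C^2)^{⊗3} = C^2_A ⊗ C^2_B ⊗ C^2_C, indexed by triples. *)
Definition idx3 := (bool * bool * bool)%type.
Definition vec3 := idx3 -> Cx.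
(* Operators on (C^2)^{⊗3} as 8x8 matrices: M x y = <x|M|y>. *)
Definition op3 := idx3 -> idx3 -> Cx.

Definition prod_state (p1 p2 p3 : qubit) : vec3 :=
  fun x => match x with (i, j, k) => Cmul (Cmul (p1 i) (p2 j)) (p3 k) end.

Definition sum2 (f : bool -> Cx) : Cx := Cadd (f false) (f true).
Definition sum3 (f : idx3 -> Cx) : Cx :=
  sum2 (fun i => sum2 (fun j => sum2 (fun k => f (i, j, k)))).

Definition expect (M : op3) (phi : vec3) : Cx :=
  sum3 (fun x => sum3 (fun y => Cmul (Cmul (Cconj (phi x)) (M x y)) (phi y))).

Definition idx3_eqb (x y : idx3) : bool :=
  match x, y with
  | (i, j, k), (i', j', k') => Bool.eqb i i' && Bool.eqb j j' && Bool.eqb k k'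
  end.

(* matrix of the permutation operator |y> |-> |s y> *)
Definition perm_op (s : idx3 -> idx3) : op3 :=
  fun x y => if idx3_eqb x (s y) then C1 else C0.

Definition Id3 : op3 := perm_op (fun y => y).
Definition V_AB : op3 := perm_op (fun y => match y with (i, j, k) => (j, i, k) end).
Definition V_AC : op3 := perm_op (fun y => match y with (i, j, k) => (k, j, i) end).
Definition V_BC : op3 := perm_op (fun y => match y with (i, j, k) => (i, k, j) end).

Definition op_add (M N : op3) : op3 := fun x y => Cadd (M x y) (N x y).
Definition op_scale (r : R) (M : op3) : op3 := fun x y => Cmul (Cof r) (M x y).

Definition local_positive (M : op3) : Prop :=
  forall p1 p2 p3 : qubit,
    unit_qubit p1 -> unit_qubit p2 -> unit_qubit p3 ->
    Im (expect M (prod_state p1 p2 p3)) = 0 /\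
    0 <= Re (expect M (prod_state p1 p2 p3)).

Definition w_op (a b c d : R) : op3 :=
  op_add (op_add (op_add (op_scale a Id3) (op_scale b V_AB))
                 (op_scale c V_AC)) (op_scale d V_BC).

(* Expanding w on a product state gives
   a + b |<p1|p2>|^2 + c |<p1|p3>|^2 + d |<p2|p3>|^2, which is real.
   Real qubits (1,0), (cos t, sin t), (cos W, sin W) realize the overlaps
   cos^2 t, cos^2 W, cos^2 (t - W), so local positivity implies the condition.
   Conversely, writing the overlaps through Bloch vectors, positivity of their
   Gram matrix forces the third overlap z into the interval between
   cos^2 (t + W) and cos^2 (t - W), where cos^2 t and cos^2 W are the first two;
   as the expectation is affine in z, it is nonnegative on that interval. *)
From Pilot Require Import Defs.
From Stdlib Require Import Reals Lra Psatz.
Open Scope R_scope.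

Definition qnorm2 (p : qubit) : R := Cnorm2 (p false) + Cnorm2 (p true).

Definition overlap2 (p q : qubit) : R :=
  Cnorm2 (sum2 (fun k => Cmul (Cconj (p k)) (q k))).

Lemma expect_w_op_prod_state a b c d p1 p2 p3 :
  expect (w_op a b c d) (prod_state p1 p2 p3) =
  Cof (a * qnorm2 p1 * qnorm2 p2 * qnorm2 p3 + b * overlap2 p1 p2 * qnorm2 p3
       + c * overlap2 p1 p3 * qnorm2 p2 + d * overlap2 p2 p3 * qnorm2 p1).
Proof.
  assert (Re_Im : Re (expect (w_op a b c d) (prod_state p1 p2 p3)) =
      a * qnorm2 p1 * qnorm2 p2 * qnorm2 p3 + b * overlap2 p1 p2 * qnorm2 p3
      + c * overlap2 p1 p3 * qnorm2 p2 + d * overlap2 p2 p3 * qnorm2 p1 /\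
    Im (expect (w_op a b c d) (prod_state p1 p2 p3)) = 0).
  { unfold expect, w_op, op_add, op_scale, Id3, V_AB, V_AC, V_BC, perm_op,
      prod_state, sum3, qnorm2, overlap2, sum2; simpl.
    destruct (p1 false) as [x1 y1], (p1 true) as [x2 y2], (p2 false) as [x3 y3],
      (p2 true) as [x4 y4], (p3 false) as [x5 y5], (p3 true) as [x6 y6].
    unfold Cnorm2, Cadd, Cmul, Cconj, Cof, Defs.C1, Defs.C0; simpl.
    split; ring. }
  revert Re_Im; destruct (expect _ _) as [re im]; simpl; intros [-> ->]; reflexivity.
Qed.

Lemma expect_w_op_unit a b c d p1 p2 p3 :
  unit_qubit p1 -> unit_qubit p2 -> unit_qubit p3 ->
  expect (w_op a b c d) (prod_state p1 p2 p3) =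
  Cof (a + b * overlap2 p1 p2 + c * overlap2 p1 p3 + d * overlap2 p2 p3).
Proof.
  intros u1 u2 u3; rewrite expect_w_op_prod_state.
  change (qnorm2 p1 = 1) in u1; change (qnorm2 p2 = 1) in u2;
  change (qnorm2 p3 = 1) in u3.
  rewrite u1, u2, u3; f_equal; ring.
Qed.

Definition real_qubit (theta : R) : qubit :=
  fun k => if k then Cof (sin theta) else Cof (cos theta).

Lemma unit_real_qubit theta : unit_qubit (real_qubit theta).
Proof.
  unfold unit_qubit, real_qubit, Cnorm2, Cof; simpl.
  pose proof (sin2_cos2 theta) as e; unfold Rsqr in e; lra.
Qed.

Lemma overlap2_real_qubit theta Omega :
  overlap2 (real_qubit theta) (real_qubit Omega) = cos (theta - Omega) ^ 2.
Proof.
  rewrite cos_minus.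
  unfold overlap2, real_qubit, sum2, Cnorm2, Cadd, Cmul, Cconj, Cof; simpl; ring.
Qed.

Lemma overlap2_real_qubit0 theta :
  overlap2 (real_qubit 0) (real_qubit theta) = cos theta ^ 2.
Proof. now rewrite overlap2_real_qubit, Rminus_0_l, cos_neg. Qed.

Definition dot3 (u v : R * R * R) : R :=
  let '(u1, u2, u3) := u in let '(v1, v2, v3) := v in
  u1 * v1 + u2 * v2 + u3 * v3.

Definition cross3 (u v : R * R * R) : R * R * R :=
  let '(u1, u2, u3) := u in let '(v1, v2, v3) := v in
  (u2 * v3 - u3 * v2, u3 * v1 - u1 * v3, u1 * v2 - u2 * v1).

Lemma dot3_ge0 u : 0 <= dot3 u u.
Proof. destruct u as [[u1 u2] u3]; simpl; nra. Qed.

Lemma dot3_Lagrange u v :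
  dot3 u u * dot3 v v - dot3 u v ^ 2 = dot3 (cross3 u v) (cross3 u v).
Proof. destruct u as [[u1 u2] u3], v as [[v1 v2] v3]; simpl; ring. Qed.

Lemma dot3_Sylvester u v w :
  (dot3 u u * dot3 v v - dot3 u v ^ 2) * (dot3 u u * dot3 w w - dot3 u w ^ 2)
  - (dot3 u u * dot3 v w - dot3 u v * dot3 u w) ^ 2 =
  dot3 u u * dot3 u (cross3 v w) ^ 2.
Proof.
  destruct u as [[u1 u2] u3], v as [[v1 v2] v3], w as [[w1 w2] w3]; simpl; ring.
Qed.

Lemma dot3_Cauchy_Schwarz u v : dot3 u v ^ 2 <= dot3 u u * dot3 v v.
Proof. pose proof (dot3_Lagrange u v); pose proof (dot3_ge0 (cross3 u v)); lra. Qed.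

Lemma dot3_Gram u v w :
  (dot3 u u * dot3 v w - dot3 u v * dot3 u w) ^ 2 <=
  (dot3 u u * dot3 v v - dot3 u v ^ 2) * (dot3 u u * dot3 w w - dot3 u w ^ 2).
Proof.
  pose proof (dot3_Sylvester u v w); pose proof (dot3_ge0 u).
  pose proof (pow2_ge_0 (dot3 u (cross3 v w))).
  assert (0 <= dot3 u u * dot3 u (cross3 v w) ^ 2) by (apply Rmult_le_pos; lra).
  lra.
Qed.

Definition bloch (p : qubit) : R * R * R :=
  (2 * (Re (p false) * Re (p true) + Im (p false) * Im (p true)),
   2 * (Re (p false) * Im (p true) - Im (p false) * Re (p true)),
   Cnorm2 (p false) - Cnorm2 (p true)).

Lemma overlap2_bloch p q :
  2 * overlap2 p q = qnorm2 p * qnorm2 q + dot3 (bloch p) (bloch q).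
Proof.
  unfold overlap2, bloch, qnorm2, sum2, Cnorm2, Cadd, Cmul, Cconj; simpl.
  destruct (p false), (p true), (q false), (q true); simpl; ring.
Qed.

Lemma dot3_bloch_diag p : dot3 (bloch p) (bloch p) = qnorm2 p ^ 2.
Proof.
  unfold bloch, qnorm2, Cnorm2; simpl.
  destruct (p false), (p true); simpl; ring.
Qed.

Lemma dot3_bloch_unit p q : unit_qubit p -> unit_qubit q ->
  dot3 (bloch p) (bloch q) = 2 * overlap2 p q - 1.
Proof.
  intros up uq; change (qnorm2 p = 1) in up; change (qnorm2 q = 1) in uq.
  rewrite overlap2_bloch, up, uq; ring.
Qed.

Lemma dot3_bloch_unit_diag p : unit_qubit p -> dot3 (bloch p) (bloch p) = 1.
Proof.
  intros up; change (qnorm2 p = 1) in up.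
  now rewrite dot3_bloch_diag, up, pow1.
Qed.

(* For overlaps of unit qubits, u = 2x - 1, v = 2y - 1, w = 2z - 1 are inner
   products of unit Bloch vectors, and the last condition is the Gram bound
   (w - u v)^2 <= (1 - u^2) (1 - v^2). *)
Definition overlap_compatible (x y z : R) : Prop :=
  0 <= x <= 1 /\ 0 <= y <= 1 /\
  (z - (x * y + (1 - x) * (1 - y))) ^ 2 <= 4 * (x * (1 - x)) * (y * (1 - y)).

Lemma overlap2_unit_bounds p q : unit_qubit p -> unit_qubit q ->
  0 <= overlap2 p q <= 1.
Proof.
  intros up uq.
  pose proof (dot3_Cauchy_Schwarz (bloch p) (bloch q)) as CS.
  rewrite !dot3_bloch_unit_diag, dot3_bloch_unit in CS by assumption.
  split; nra.
Qed.

Lemma overlap2_compatible p1 p2 p3 :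
  unit_qubit p1 -> unit_qubit p2 -> unit_qubit p3 ->
  overlap_compatible (overlap2 p1 p2) (overlap2 p1 p3) (overlap2 p2 p3).
Proof.
  intros u1 u2 u3.
  pose proof (dot3_Gram (bloch p1) (bloch p2) (bloch p3)) as Gram.
  rewrite !dot3_bloch_unit_diag, !dot3_bloch_unit in Gram by assumption.
  split; [|split]; [exact (overlap2_unit_bounds _ _ u1 u2)
                   | exact (overlap2_unit_bounds _ _ u1 u3) | nra].
Qed.

Lemma sqr_le_between z m r : 0 <= r -> (z - m) ^ 2 <= r ^ 2 ->
  m - r <= z <= m + r.
Proof. intros r0 h; split; nra. Qed.

Lemma overlap_compatible_sqrt_range x y z : overlap_compatible x y z ->
  (sqrt x * sqrt y - sqrt (1 - x) * sqrt (1 - y)) ^ 2 <= z <=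
  (sqrt x * sqrt y + sqrt (1 - x) * sqrt (1 - y)) ^ 2.
Proof.
  intros (hx & hy & hz).
  set (s := sqrt x) in *; set (t := sqrt y) in *.
  set (s' := sqrt (1 - x)) in *; set (t' := sqrt (1 - y)) in *.
  assert (ss : s * s = x) by (apply sqrt_sqrt; lra).
  assert (tt : t * t = y) by (apply sqrt_sqrt; lra).
  assert (ss' : s' * s' = 1 - x) by (apply sqrt_sqrt; lra).
  assert (tt' : t' * t' = 1 - y) by (apply sqrt_sqrt; lra).
  rewrite <- ss', <- tt' in hz; rewrite <- ss, <- tt in hz.
  assert (r0 : 0 <= s * t * (s' * t')).
  { pose proof (sqrt_pos x); pose proof (sqrt_pos y).
    pose proof (sqrt_pos (1 - x)); pose proof (sqrt_pos (1 - y)).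
    apply Rmult_le_pos; apply Rmult_le_pos; assumption. }
  pose proof (sqr_le_between z (s * s * (t * t) + s' * s' * (t' * t'))
    (2 * (s * t * (s' * t'))) ltac:(lra) ltac:(nra)) as range.
  split; nra.
Qed.

Lemma overlap_compatible_cos_range x y z : overlap_compatible x y z ->
  exists theta Omega, cos theta ^ 2 = x /\ cos Omega ^ 2 = y /\
    cos (theta + Omega) ^ 2 <= z <= cos (theta - Omega) ^ 2.
Proof.
  intros hc; pose proof (overlap_compatible_sqrt_range x y z hc) as range.
  destruct hc as (hx & hy & _).
  assert (acos_sqrt : forall t, 0 <= t <= 1 ->
    cos (acos (sqrt t)) = sqrt t /\ sin (acos (sqrt t)) = sqrt (1 - t)).
  { intros t ht.
    assert (st : -1 <= sqrt t <= 1).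
    { pose proof (sqrt_pos t); pose proof (sqrt_le_1_alt t 1 ltac:(lra)).
      rewrite sqrt_1 in *; lra. }
    split; [exact (cos_acos _ st)|].
    now rewrite sin_acos, Rsqr_sqrt by lra. }
  destruct (acos_sqrt x hx) as [cx sx], (acos_sqrt y hy) as [cy sy].
  exists (acos (sqrt x)), (acos (sqrt y)).
  rewrite cos_plus, cos_minus, cx, sx, cy, sy, !pow2_sqrt by lra.
  repeat split; lra.
Qed.

Lemma affine_nonneg_between K d m M z :
  m <= z <= M -> 0 <= K + d * m -> 0 <= K + d * M -> 0 <= K + d * z.
Proof.
  intros [hm hM] h_m h_M; destruct (Rle_dec 0 d).
  - assert (d * m <= d * z) by (apply Rmult_le_compat_l; lra); lra.
  - assert (d * M <= d * z) by (apply Rmult_le_compat_neg_l; lra); lra.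
Qed.

Theorem mainTheorem12 (a b c d : R) :
  local_positive (w_op a b c d) <->
  (forall theta Omega : R,
     0 <= a + b * (cos theta) ^ 2 + c * (cos Omega) ^ 2
            + d * (cos (theta - Omega)) ^ 2).
Proof.
  split.
  - intros Hw theta Omega.
    destruct (Hw (real_qubit 0) (real_qubit theta) (real_qubit Omega))
      as [_ Hre]; try apply unit_real_qubit.
    rewrite expect_w_op_unit, !overlap2_real_qubit0, overlap2_real_qubit in Hre
      by apply unit_real_qubit.
    exact Hre.
  - intros Hcos p1 p2 p3 u1 u2 u3.
    rewrite expect_w_op_unit by assumption; simpl; split; [reflexivity|].
    destruct (overlap_compatible_cos_range _ _ _ (overlap2_compatible _ _ _ u1 u2 u3))
      as (theta & Omega & <- & <- & range).
    apply (affine_nonneg_between _ _ _ _ _ range).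
    + replace (theta + Omega) with (theta - - Omega) by ring.
      rewrite <- (cos_neg Omega); apply Hcos.
    + apply Hcos.
Qed.
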